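(* Let $s,d,k\ge1$ and let $I=(G,D,\mathsf{cost},\mathsf{supply},\mathsf{demand})$ be an $(s,d)$-decent instance of Min Weight Generalized Domination with minimum solution cost $\mathsf{OPT}$. Let $V_0,\dots,V_{k-1}\subseteq V(G)$ be such that the sets $N_G[V_0],\dots,N_G[V_{k-1}]$ are pairwise disjoint, and for each $j$ let $I_j=\mathsf{Clear}(I;V_j)$. Then (1) for every $j\in\{0,\dots,k-1\}$, $I_j$ is $(s,d)$-decent and has a solution of cost at most $\mathsf{OPT}$; and (2) there exists $j\in\{0,\dots,k-1\}$ such that every solution to $I_j$ has cost at least $(1-\frac1k)\mathsf{OPT}$.
   Context: An instance of Min Weight Generalized Domination consists of a loopless multigraph $G$ and for every vertex $u$: a finite domain $D_u$, $\mathsf{cost}_u\colon D_u\to\mathbb{R}_{\ge0}\cup\{+\infty\}$, and $\mathsf{supply}_u,\mathsf{demand}_u\colon D_u\to 2^{\delta(u)}$ ($\delta(u)$ = edges incident to $u$), with some $s_u\in D_u$ having $\mathsf{supply}_u(s_u)=\delta(u)$ and finite cost. A solution is $\phi$ with $\phi(u)\in D_u$ such that for every edge $e$ with endpoints $u,v$, $e\in\mathsf{demand}_u(\phi(u))\Rightarrow e\in\mathsf{supply}_v(\phi(v))$ and $e\in\mathsf{demand}_v(\phi(v))\Rightarrow e\in\mathsf{supply}_u(\phi(u))$; cost $\sum_u\mathsf{cost}_u(\phi(u))$. A vertex is $(s,d)$-meager if $|\delta(u)|\le s$ and $|D_u|\le d$; state-monotonous if for all ordered $x_1,x_2\in D_u$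 there is $x\in D_u$ with $\mathsf{cost}_u(x)\le\mathsf{cost}_u(x_1)+\mathsf{cost}_u(x_2)$, $\mathsf{supply}_u(x)=\mathsf{supply}_u(x_1)\cup\mathsf{supply}_u(x_2)$, $\mathsf{demand}_u(x)\subseteq\mathsf{demand}_u(x_1)$. The instance is $(s,d)$-decent if all vertices are $(s,d)$-meager and state-monotonous. For $A\subseteq V(G)$, $N_G[A]$ is the closed neighborhood of $A$. $\mathsf{Clear}(I;A)$ is obtained from $I$ by deleting all edges with both endpoints in $A$ (also from all supply and demand sets) and then setting $\mathsf{demand}_u(x)=\emptyset$ for every $u\in A$ and every $x\in D_u$. *)

From mathcomp Require Import all_boot all_order all_algebra.
From mathcomp Require Import reals constructive_ereal.
Set Implicit Arguments. Unset Strict Implicit. Unset Printing Implicit Defensive.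
Import Order.TTheory GRing.Theory Num.Theory.
Local Open Scope ring_scope.
Local Open Scope ereal_scope.

(* Vertices range over the finite type V (V(G) = all of V).
   The multigraph has edge identifiers in a finite type E; the actual edge set
   is [edges], and [ends e] gives the two endpoints of e (unordered in
   meaning; the order of the pair is irrelevant in all definitions). *)
Record instance (R : realType) (V E : finType) := Instance {
  edges : {set E};
  ends : E -> V * V;
  dom : V -> finType;
  cost : forall u, dom u -> \bar R;
  supply : forall u, dom u -> {set E};
  demand : forall u, dom u -> {set E}
}.

Section Defs.
Variables (R : realType) (V E : finType).
Implicit Types (I : instance R V E) (A : {set V}).

Definition incident (e : E) (u : V) I := ((ends I e).1 == u) || ((ends I e).2 == u).

Definition delta I (u : V) : {set E} := [set e in edges I | incident e u I].

Definition wf_instance I : Prop :=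
  [/\ (forall e, e \in edges I -> (ends I e).1 != (ends I e).2),
      (forall u (x : dom I u), 0 <= cost x),
      (forall u (x : dom I u), supply x \subset delta I u /\ demand x \subset delta I u)
    & (forall u, exists s : dom I u, supply s = delta I u /\ cost s < +oo)].

Definition is_solution I (phi : forall u, dom I u) : Prop :=
  forall e, e \in edges I ->
    let u := (ends I e).1 in let v := (ends I e).2 in
    (e \in demand (phi u) -> e \in supply (phi v)) /\
    (e \in demand (phi v) -> e \in supply (phi u)).

Arguments is_solution I phi : clear implicits.

Definition sol_cost I (phi : forall u, dom I u) : \bar R :=
  \sum_(u : V) cost (phi u).

Arguments sol_cost I phi : clear implicits.

Definition is_opt I (OPT : \bar R) : Prop :=
  (exists phi, is_solution I phi /\ sol_cost I phi = OPT) /\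
  (forall phi, is_solution I phi -> OPT <= sol_cost I phi).

Definition meager (s d : nat) I (u : V) : Prop :=
  (#|delta I u| <= s)%N /\ (#|dom I u| <= d)%N.

Definition state_monotonous I (u : V) : Prop :=
  forall x1 x2 : dom I u, exists x : dom I u,
    [/\ cost x <= cost x1 + cost x2,
        supply x = supply x1 :|: supply x2
      & demand x \subset demand x1].

Definition decent (s d : nat) I : Prop :=
  wf_instance I /\ forall u, meager s d I u /\ state_monotonous I u.

Definition closed_nbhd I A : {set V} :=
  A :|: [set v | [exists e in edges I,
           ((ends I e).1 \in A) && ((ends I e).2 == v) ||
           ((ends I e).2 \in A) && ((ends I e).1 == v)]].

Definition clear_edges I A : {set E} :=
  [set e in edges I | ~~ (((ends I e).1 \in A) && ((ends I e).2 \in A))].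

Definition Clear I A : instance R V E :=
  @Instance R V E (clear_edges I A) (ends I) (@dom _ _ _ I) (@cost _ _ _ I)
    (fun u x => supply x :&: clear_edges I A)
    (fun u x => if u \in A then set0 else demand x :&: clear_edges I A).

End Defs.
Arguments is_solution {R V E} I phi.
Arguments sol_cost {R V E} I phi.

From mathcomp Require Import all_boot all_order all_algebra.
From mathcomp Require Import reals constructive_ereal.
Import Order.TTheory GRing.Theory Num.Theory.
Local Open Scope ring_scope.
Local Open Scope ereal_scope.

(* Clearing A only deletes edges and demands, so an optimal solution of I
   stays a solution of Clear(I; A).  Conversely, a solution psi of Clear(I; A)
   is repaired into a solution of I by merging it, via state monotonicity,
   with an optimal solution phi on N[A]: on A the merged state keeps the
   demand of phi and on N[A] it supplies everything phi supplies, while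
   outside A it keeps the demand of psi.  Hence OPT <= cost(psi) + c_j, where
   c_j is the part of OPT paid on N[V_j].  As the N[V_j] are disjoint, some
   c_j is at most OPT / k. *)

Section ClosedNbhd.
Variables (R : realType) (V E : finType) (I : instance R V E) (A : {set V}).

Lemma closed_nbhd_end2 e :
  e \in edges I -> (ends I e).1 \in A -> (ends I e).2 \in closed_nbhd I A.
Proof.
move=> he ha; rewrite in_setU; apply/orP; right; rewrite inE.
by apply/existsP; exists e; rewrite he ha eqxx.
Qed.

Lemma closed_nbhd_end1 e :
  e \in edges I -> (ends I e).2 \in A -> (ends I e).1 \in closed_nbhd I A.
Proof.
move=> he ha; rewrite in_setU; apply/orP; right; rewrite inE.
by apply/existsP; exists e; rewrite he ha eqxx orbT.
Qed.

Lemma sub_closed_nbhd : A \subset closed_nbhd I A.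
Proof. exact: subsetUl. Qed.

End ClosedNbhd.

Arguments closed_nbhd_end1 {R V E I A e}.
Arguments closed_nbhd_end2 {R V E I A e}.
Arguments sub_closed_nbhd {R V E}.

Section ClearInstance.
Variables (R : realType) (V E : finType) (I : instance R V E) (A : {set V}).

Lemma clear_edges_sub : clear_edges I A \subset edges I.
Proof. by apply/subsetP=> e; rewrite inE => /andP[]. Qed.

Lemma delta_Clear u : delta (Clear I A) u = delta I u :&: clear_edges I A.
Proof.
apply/setP=> e; rewrite !inE /incident /=.
by case: (e \in edges I); case: ((ends I e).1 \in A); case: ((ends I e).2 \in A);
   case: ((ends I e).1 == u); case: ((ends I e).2 == u).
Qed.

Lemma decent_Clear s d : decent s d I -> decent s d (Clear I A).
Proof.
move=> [[Hloop Hcost Hsub Hfull] Hu]; split; first split.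
- by move=> e /(subsetP clear_edges_sub); apply: Hloop.
- exact: Hcost.
- move=> u x; rewrite delta_Clear /=; have [Hs Hd] := Hsub u x; split.
    exact: setSI.
  by case: ifP => _; [apply: sub0set | apply: setSI].
- by move=> u; have [x [Hx Hcx]] := Hfull u; exists x; rewrite delta_Clear /= Hx.
move=> u; have [[Hdeg Hdom] Hmono] := Hu u; split.
  split=> //; apply: leq_trans Hdeg; rewrite delta_Clear.
  exact/subset_leq_card/subsetIl.
move=> x1 x2; have [x [Hc Hs Hd]] := Hmono x1 x2; exists x; split=> //=.
  by rewrite Hs setIUl.
by case: ifP => _; [apply: sub0set | apply: setSI].
Qed.

Lemma is_solution_Clear phi : is_solution I phi -> is_solution (Clear I A) phi.
Proof.
move=> Hphi e /= he; have [H1 H2] := Hphi e (subsetP clear_edges_sub _ he).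
by split; case: ifP => _; rewrite ?in_set0 // !in_setI he !andbT; auto.
Qed.

End ClearInstance.

Section Patch.
Variables (R : realType) (V E : finType) (I : instance R V E).

Definition merge_spec (m : forall u, dom I u -> dom I u -> dom I u) : Prop :=
  forall u x1 x2, [/\ cost (m u x1 x2) <= cost x1 + cost x2,
    supply (m u x1 x2) = supply x1 :|: supply x2
  & demand (m u x1 x2) \subset demand x1].

Lemma exists_merge :
  (forall u, state_monotonous I u) -> exists m, merge_spec m.
Proof.
move=> Hmono.
have Hmerge u : exists mu : dom I u -> dom I u -> dom I u, forall x1 x2,
    [/\ cost (mu x1 x2) <= cost x1 + cost x2,
      supply (mu x1 x2) = supply x1 :|: supply x2
    & demand (mu x1 x2) \subset demand x1].
  exact: fin_all_exists (fun x1 => fin_all_exists (Hmono u x1)).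
by have [m Hm] := fin_all_exists Hmerge; exists m.
Qed.

Variables (A : {set V}) (m : forall u, dom I u -> dom I u -> dom I u).
Hypothesis Hm : merge_spec m.
Variables (phi : forall u, dom I u) (psi : forall u, dom (Clear I A) u).

(* The argument order of [m] decides whose demand is kept. *)
Definition patch u : dom I u :=
  if u \in A then m u (phi u) (psi u)
  else if u \in closed_nbhd I A then m u (psi u) (phi u) else psi u.

Lemma patch_supply_psi u : supply (i:=I) (psi u) \subset supply (patch u).
Proof.
rewrite /patch; case: ifP => _.
  by have [_ -> _] := Hm u (phi u) (psi u); apply: subsetUr.
by case: ifP => _ //; have [_ -> _] := Hm u (psi u) (phi u); apply: subsetUl.
Qed.

Lemma patch_supply_phi {u} :
  u \in closed_nbhd I A -> supply (phi u) \subset supply (patch u).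
Proof.
rewrite /patch => hN; case: ifP => _.
  by have [_ -> _] := Hm u (phi u) (psi u); apply: subsetUl.
by rewrite hN; have [_ -> _] := Hm u (psi u) (phi u); apply: subsetUr.
Qed.

Lemma patch_demand_in {u} : u \in A -> demand (patch u) \subset demand (phi u).
Proof. by rewrite /patch => ->; have [_ _ ->] := Hm u (phi u) (psi u). Qed.

Lemma patch_demand_out {u} :
  u \notin A -> demand (patch u) \subset demand (i:=I) (psi u).
Proof.
rewrite /patch => /negbTE ->; case: ifP => _ //.
by have [_ _ ->] := Hm u (psi u) (phi u).
Qed.

Lemma patch_demand_supplied e u v :
  (u \in A -> v \in closed_nbhd I A) -> (u \notin A -> e \in clear_edges I A) ->
  (e \in demand (phi u) -> e \in supply (phi v)) ->
  (e \in clear_edges I A ->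
     e \in demand (i:=Clear I A) (psi u) -> e \in supply (i:=Clear I A) (psi v)) ->
  e \in demand (patch u) -> e \in supply (patch v).
Proof.
move=> Hv Hclear Hphi Hpsi; have [hu|hu] := boolP (u \in A).
  move=> /(subsetP (patch_demand_in hu)) /Hphi.
  exact: subsetP (patch_supply_phi (Hv hu)) e.
move=> /(subsetP (patch_demand_out hu)) hd; apply: (subsetP (patch_supply_psi v)).
have hc := Hclear hu.
have /(Hpsi hc) : e \in demand (i:=Clear I A) (psi u).
  by rewrite /= (negbTE hu) in_setI hd hc.
by rewrite /= in_setI => /andP[].
Qed.

Lemma patch_is_solution :
  is_solution I phi -> is_solution (Clear I A) psi -> is_solution I patch.
Proof.
move=> Hphi Hpsi e he /=; have [p1 p2] := Hphi e he.
have Hclear : ((ends I e).1 \notin A) || ((ends I e).2 \notin A) ->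
    e \in clear_edges I A by rewrite inE he -negb_and.
split; apply: patch_demand_supplied => //.
- exact: closed_nbhd_end2.
- by move=> hu; apply: Hclear; rewrite hu.
- by move=> /Hpsi [].
- exact: closed_nbhd_end1.
- by move=> hv; apply: Hclear; rewrite hv orbT.
- by move=> /Hpsi [].
Qed.

Lemma patch_cost : sol_cost I patch <=
  sol_cost (Clear I A) psi + \sum_(u in closed_nbhd I A) cost (phi u).
Proof.
rewrite /sol_cost [X in _ <= _ + X]big_mkcond /= -big_split /=.
apply: lee_sum => u _; rewrite /patch; case: ifP => hA.
  rewrite (subsetP (sub_closed_nbhd I A) _ hA) addeC.
  by have [] := Hm u (phi u) (psi u).
case: ifP => hN; first by have [] := Hm u (psi u) (phi u).
by rewrite adde0.
Qed.

End Patch.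

Arguments exists_merge {R V E I}.
Arguments patch_is_solution {R V E I A m} Hm {phi psi}.
Arguments patch_cost {R V E I A m} Hm phi psi.

Section Optimum.
Variables (R : realType) (V E : finType) (I : instance R V E).

Lemma is_opt_fin_num OPT : wf_instance I -> is_opt I OPT -> OPT \is a fin_num.
Proof.
move=> [_ Hcost _ Hfull] [[phi [_ <-]] Hopt].
have [full Hfull_spec] := fin_all_exists Hfull.
have Hsol : is_solution I full.
  by move=> e he /=; rewrite !(proj1 (Hfull_spec _)) !inE he /incident !eqxx orbT.
rewrite ge0_fin_numE; last by apply: sume_ge0 => u _; apply: Hcost.
apply: le_lt_trans (Hopt _ Hsol) _; apply: lte_sum_pinfty => u _.
exact: (proj2 (Hfull_spec u)).
Qed.

Lemma opt_le_Clear_cost A OPT phi psi :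
  (forall u, state_monotonous I u) ->
  (forall chi, is_solution I chi -> OPT <= sol_cost I chi) ->
  is_solution I phi -> is_solution (Clear I A) psi ->
  OPT <= sol_cost (Clear I A) psi + \sum_(u in closed_nbhd I A) cost (phi u).
Proof.
move=> Hmono Hopt Hphi Hpsi; have [m Hm] := exists_merge Hmono.
apply: le_trans (Hopt _ (patch_is_solution Hm Hphi Hpsi)) _.
exact: patch_cost Hm phi psi.
Qed.

End Optimum.

Arguments is_opt_fin_num {R V E I OPT}.

Lemma exists_light_block {R : realDomainType} {T : finType} {k : nat}
    {N : 'I_k -> {set T}} {r : T -> R} :
  (0 < k)%N -> (forall u, (0 <= r u)%R) ->
  (forall i j, i != j -> [disjoint N i & N j]) ->
  exists j, ((\sum_(u in N j) r u) * k%:R <= \sum_u r u)%R.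
Proof.
move=> hk r_ge0 Hdisj; pose c j := (\sum_(u in N j) r u)%R.
have [j _ Hmin] := @arg_minP _ _ _ (Ordinal hk) predT c isT.
exists j; apply: (@le_trans _ _ (\sum_j c j)%R).
  have -> : (c j * k%:R = \sum_(i < k) c j)%R.
    by rewrite sumr_const card_ord mulr_natr.
  by apply: ler_sum => i _; apply: Hmin.
rewrite /c -(partition_disjoint_bigcup _ _ Hdisj).
rewrite [X in (_ <= X)%R](bigID (fun u => u \in \bigcup_j N j)) /=.
by rewrite lerDl sumr_ge0.
Qed.

Lemma lower_bound_of_light_share {R : realFieldType} {k : nat} {T c : R}
    {y : \bar R} :
  (0 < k)%N -> (c * k%:R <= T)%R -> T%:E <= y + c%:E ->
  (1 - k%:R^-1)%:E * T%:E <= y.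
Proof.
move=> hk Hc; case: y => [y| |] Hy /=; last 2 first.
- by rewrite leey.
- by move: Hy; rewrite /= leeNy_eq.
move: Hy; rewrite -EFinD !lee_fin -lerBlDr => Hy; apply: le_trans Hy.
rewrite mulrBl mul1r lerD2l lerN2 mulrC ler_pdivlMr ?ltr0n //.
Qed.

Theorem lemma4p3 (R : realType) (V E : finType) (s d k : nat)
    (I : instance R V E) (OPT : \bar R) (Vs : 'I_k -> {set V}) :
  (1 <= s)%N -> (1 <= d)%N -> (1 <= k)%N ->
  decent s d I ->
  is_opt I OPT ->
  (forall i j : 'I_k, i != j ->
     [disjoint closed_nbhd I (Vs i) & closed_nbhd I (Vs j)]) ->
  (forall j : 'I_k,
     decent s d (Clear I (Vs j)) /\
     exists phi, is_solution (Clear I (Vs j)) phi /\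
                 sol_cost (Clear I (Vs j)) phi <= OPT) /\
  (exists j : 'I_k, forall phi, is_solution (Clear I (Vs j)) phi ->
     ((1 - (k%:R)^-1)%:E * OPT <= sol_cost (Clear I (Vs j)) phi)).
Proof.
move=> _ _ hk Hdec HOPT Hdisj; have [[phi [Hphi Hcost]] Hopt] := HOPT.
split=> [j|].
  split; first exact: decent_Clear.
  by exists phi; split; [exact: is_solution_Clear | rewrite -Hcost].
have [Hwf Hmono] := Hdec; have [_ cost_ge0 _ _] := Hwf.
have phi_fin u : cost (phi u) \is a fin_num.
  by move: (is_opt_fin_num Hwf HOPT); rewrite -Hcost => /sum_fin_numP ->.
pose r u := fine (cost (phi u)).
have OPT_sum : OPT = (\sum_u r u)%:E by rewrite -Hcost /r EFin_sum_fine.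
have [j Hj] := exists_light_block (r := r) hk
  (fun u => fine_ge0 (cost_ge0 u (phi u))) Hdisj.
exists j => psi Hpsi; rewrite OPT_sum.
apply: (lower_bound_of_light_share hk Hj).
rewrite -OPT_sum /r EFin_sum_fine //.
by apply: opt_le_Clear_cost => // u; case: (Hmono u).
Qed.
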